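(* Let $p,q$ be positive integers with $p/q\ge 2$, let $G$ be a connected graph with a fixed orientation $\overrightarrow{G}$, and let $\varphi,\psi$ be two $(p,q)$-labellings of $G$. Then $\varphi$ can be transformed into $\psi$ through a finite sequence of edge cut relabellings if and only if $\varphi(C)=\psi(C)$ for every cycle $C$ of $G$.
   Context: Fix an orientation $\overrightarrow{G}$ of $G$. For an edge-labelling $\varphi:E(G)\to\{0,1,\dots,p-1\}$ and a cycle $C$ with a chosen direction of traversal, let $C^+$ be the edges of $C$ whose orientation agrees with the traversal and $C^-$ the others, and define $\varphi(C)=\sum_{e\in C^+}\varphi(e)+\sum_{e\in C^-}(p-\varphi(e))$, the sum taken in $\mathbb{Z}$. A $(p,q)$-labelling is an edge-labelling $\varphi:E(G)\to\{0,\dots,p-1\}$ such that (P1) $q\le\varphi(e)\le p-q$ for every edge $e$, and (P2) $\varphi(C)\equiv 0\pmod p$ for every cycle $C$. For $\emptyset\ne X\subsetneq V(G)$, let $\partial^+(X)$ (resp. $\partial^-(X)$) be the set of arcs of $\overrightarrow{G}$ from $X$ to $V(G)\setminus X$ (resp. from $V(G)\setminus X$ to $X$). Given a $(p,q)$-labelling $\varphi$ and an integer $1\le\alpha\le p-1$ such that $\varphi(e)\ge q+\alpha$ for all $e\in\partial^+(X)$ and $\varphi(e)\le p-q-\alpha$ for all $e\in\partial^-(X)$, the edge cut relabelling of $\varphi$ on $\partial(X)$ by $\alpha$ is the labelling $\varphi'$ with $\varphi'(e)=\varphi(e)-\alpha$ for $e\in\partial^+(X)$, $\varphi'(e)=\varphi(e)+\alpha$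 for $e\in\partial^-(X)$, and $\varphi'(e)=\varphi(e)$ otherwise. *)

From mathcomp Require Import all_boot.
Set Implicit Arguments. Unset Strict Implicit. Unset Printing Implicit Defensive.

(* An edge-labelling assigns a value phi x y to
   every arc (x,y) with o x y; values on non-arcs are irrelevant. *)

Section Defs.
Variable V : finType.

Definition simple_graph (g : rel V) : Prop :=
  (forall x, ~~ g x x) /\ (forall x y, g x y = g y x).

Definition orientation (g o : rel V) : Prop :=
  (forall x y, o x y -> g x y) /\ (forall x y, g x y -> o x y (+) o y x).

Definition connected_graph (g : rel V) : Prop := forall x y, connect g x y.

(* A cycle of g with a chosen direction of traversal: a duplicate-free
   sequence of at least 3 vertices, consecutive ones (cyclically) adjacent. *)
Definition is_cycle (g : rel V) (c : seq V) : Prop :=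
  [/\ (3 <= size c)%N, uniq c & cycle g c].

Definition contrib (p : nat) (o : rel V) (phi : V -> V -> nat) (uv : V * V) : nat :=
  if o uv.1 uv.2 then phi uv.1 uv.2 else p - phi uv.2 uv.1.

(* phi(C) = sum over C^+ of phi(e) + sum over C^- of (p - phi(e)) *)
Definition cycle_value (p : nat) (o : rel V) (phi : V -> V -> nat) (c : seq V) : nat :=
  \sum_(uv <- zip c (rot 1 c)) contrib p o phi uv.

Definition pq_labelling (p q : nat) (g o : rel V) (phi : V -> V -> nat) : Prop :=
  (forall x y, o x y -> phi x y < p) /\
  (forall x y, o x y -> q <= phi x y <= p - q) /\
  (forall c, is_cycle g c -> cycle_value p o phi c %% p = 0).

Definition cut_relabelling (p q : nat) (o : rel V) (phi : V -> V -> nat)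
  (X : {set V}) (alpha : nat) (phi' : V -> V -> nat) : Prop :=
  [/\ (X != set0) && (X != setT), 1 <= alpha <= p - 1,
      (forall x y, o x y -> x \in X -> y \notin X -> q + alpha <= phi x y),
      (forall x y, o x y -> x \notin X -> y \in X -> phi x y <= p - q - alpha) &
      (forall x y, o x y ->
         phi' x y = if (x \in X) && (y \notin X) then phi x y - alpha
                    else if (x \notin X) && (y \in X) then phi x y + alpha
                    else phi x y)].

Definition relabel_step (p q : nat) (g o : rel V) (phi phi' : V -> V -> nat) : Prop :=
  pq_labelling p q g o phi /\
  exists (X : {set V}) (alpha : nat), cut_relabelling p q o phi X alpha phi'.

Inductive relabel_reach (p q : nat) (g o : rel V) :
  (V -> V -> nat) -> (V -> V -> nat) -> Prop :=
| rr_refl phi psi : (forall x y, o x y -> phi x y = psi x y) ->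
    relabel_reach p q g o phi psi
| rr_step phi phi' psi : relabel_step p q g o phi phi' ->
    relabel_reach p q g o phi' psi -> relabel_reach p q g o phi psi.

End Defs.

From mathcomp Require Import all_boot all_algebra zify.
Set Implicit Arguments. Unset Strict Implicit. Unset Printing Implicit Defensive.
Import GRing.Theory.

(* An edge cut relabelling of X by alpha changes phi by the coboundary of the
   potential alpha * 1_X, so it preserves every cycle value.  Conversely, if phi
   and psi have the same cycle values, psi - phi sums to zero around every cycle,
   hence around every closed walk, so on the connected graph it is the
   coboundary of a potential h >= 0.  Relabelling by 1 the cut around the set
   where h is maximal lowers the total of h; the (p,q)-bounds of psi make this a
   legal relabelling producing a (p,q)-labelling, and once h is constant,
   phi = psi. *)

Section Walks.
Variables (T : eqType) (g : rel T).

Lemma walk_edge x s uv : path g x s -> uv \in zip (belast x s) s -> g uv.1 uv.2.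
Proof.
elim: s x => [|y s IH] x //= /andP[gxy walk_s].
by rewrite in_cons => /orP[/eqP-> // | /IH]; apply.
Qed.

Lemma cycle_edge c uv : cycle g c -> uv \in zip c (rot 1 c) -> g uv.1 uv.2.
Proof.
case: c => [|x s] //= cyc_s.
by rewrite rot1_cons -(belast_rcons x s x); apply: walk_edge.
Qed.

End Walks.

Lemma not_uniq_split (T : eqType) (s : seq T) :
  ~~ uniq s -> exists a y b c, s = a ++ y :: b ++ y :: c.
Proof.
elim: s => [|z s IH] //=; rewrite negb_and negbK.
case/orP=> [/splitPr[b c] | /IH[a [y [b [c ->]]]]].
  by exists [::], z, b, c.
by exists (z :: a), y, b, c.
Qed.

Lemma telescope_cycle (T : eqType) (R : zmodType) (f : T -> R) (c : seq T) :
  (\sum_(uv <- zip c (rot 1 c)) (f uv.2 - f uv.1) = 0)%R.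
Proof.
have size_rot1 : size (rot 1 c) = size c by rewrite size_rot.
rewrite sumrB -(big_map snd predT f) -(big_map fst predT f).
rewrite -/(unzip1 _) -/(unzip2 _) unzip1_zip ?size_rot1 // unzip2_zip ?size_rot1 //.
have rot_c : perm_eq (rot 1 c) c by rewrite perm_rot.
by rewrite (perm_big _ rot_c) subrr.
Qed.

Section WalkWeight.
Variables (T : eqType) (g : rel T) (d : T -> T -> int).
Local Open Scope ring_scope.

Definition walk_weight x s := \sum_(uv <- zip (belast x s) s) d uv.1 uv.2.

Lemma walk_weight_cons x y s : walk_weight x (y :: s) = d x y + walk_weight y s.
Proof. by rewrite /walk_weight /= big_cons. Qed.

Lemma walk_weight_cat x s1 s2 :
  walk_weight x (s1 ++ s2) = walk_weight x s1 + walk_weight (last x s1) s2.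
Proof. by rewrite /walk_weight belast_cat zip_cat ?size_belast // big_cat. Qed.

Hypothesis g_irr : forall x, ~~ g x x.
Hypothesis d_anti : forall x y, g x y -> d x y + d y x = 0.

(* A closed walk that is not a simple cycle either goes back and forth along
   one edge or repeats a vertex, and then splits into two shorter closed walks. *)
Lemma closed_walk_weight0 :
  (forall x s, path g x s -> last x s = x -> uniq s -> (3 <= size s)%N ->
     walk_weight x s = 0) ->
  forall x s, path g x s -> last x s = x -> walk_weight x s = 0.
Proof.
move=> simple0 x s; have [n] := ubnP (size s).
elim: n x s => // n IH x s /ltnSE le_s_n walk_s last_s.
have [uniq_s | /not_uniq_split[a [y [b [c def_s]]]]] := boolP (uniq s).
  have [le3_s | ] := leqP 3 (size s); first exact: simple0.
  case: s walk_s last_s {le_s_n uniq_s} => [|z [|z' [|]]] //=.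
  - by rewrite /walk_weight big_nil.
  - by move=> /andP[gxz _] zx; move: gxz; rewrite zx (negbTE (g_irr x)).
  - move=> /and3P[gxz _ _] -> _.
    by rewrite !walk_weight_cons /walk_weight big_nil addr0 d_anti.
have {}def_s : s = rcons a y ++ rcons b y ++ c by rewrite def_s -!cats1 -!catA.
move: walk_s last_s le_s_n.
rewrite def_s !cat_path !last_cat !last_rcons !size_cat !size_rcons.
move=> /and3P[walk_a walk_b walk_c] last_c le_n.
rewrite !walk_weight_cat !last_rcons (IH y (rcons b y)) ?last_rcons ?size_rcons //;
  last by lia.
have := IH x (rcons a y ++ c); rewrite walk_weight_cat last_rcons last_cat last_rcons.
rewrite cat_path last_rcons walk_a walk_c size_cat size_rcons add0r => -> //; lia.
Qed.

End WalkWeight.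

Section Potential.
Variables (T : finType) (g : rel T) (d : T -> T -> int).
Hypothesis g_connected : forall x y, connect g x y.
Hypothesis closed_walk0 :
  forall x s, path g x s -> last x s = x -> walk_weight d x s = 0%R.

(* f v is minus the weight of a fixed walk from v to a root r: the closed walks
   r ~> u ~> r and r ~> u -> v ~> r differ exactly by the edge uv. *)
Lemma exists_potential : exists f : T -> int, forall u v, g u v -> d u v = (f v - f u)%R.
Proof.
have [r _ | T0] := pickP (@predT T); last by exists (fun=> 0%R) => u; have := T0 u.
have /all_sig[back /(_ _)/andP back_r] : forall v, {s | path g v s && (last v s == r)}.
  move=> v; apply: sigW; have /connectP[s walk_s ->] := g_connected v r.
  by exists s; rewrite walk_s eqxx.
exists (fun v => - walk_weight d v (back v))%R => u v guv.
have /connectP[s walk_s last_s] := g_connected r u.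
have [[walk_u /eqP last_u] [walk_v /eqP last_v]] := (back_r u, back_r v).
have Eu : walk_weight d r (s ++ back u) = 0%R.
  by apply: closed_walk0; rewrite ?cat_path ?last_cat -last_s ?walk_s.
have Ev : walk_weight d r (s ++ v :: back v) = 0%R.
  by apply: closed_walk0; rewrite ?cat_path ?last_cat -last_s /= ?walk_s ?guv.
move: Eu Ev; rewrite !walk_weight_cat -last_s walk_weight_cons; lia.
Qed.

End Potential.

Section Labellings.
Variables (V : finType) (g o : rel V) (p q : nat).
Hypothesis o_xor : forall x y, g x y -> o x y (+) o y x.

Definition label_diff (phi psi : V -> V -> nat) (u v : V) : int :=
  if o u v then ((psi u v)%:Z - (phi u v)%:Z)%R else ((phi v u)%:Z - (psi v u)%:Z)%R.

Lemma label_diff_anti phi psi x y :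
  g x y -> (label_diff phi psi x y + label_diff phi psi y x = 0)%R.
Proof. by move/o_xor; rewrite /label_diff; case: (o x y); case: (o y x) => //= _; lia. Qed.

Lemma label_diff_potential phi psi (f : V -> int) :
  (forall x y, o x y -> ((psi x y)%:Z - (phi x y)%:Z = f y - f x)%R) ->
  forall x y, g x y -> label_diff phi psi x y = (f y - f x)%R.
Proof.
move=> df x y /o_xor; rewrite /label_diff.
case: ifP => [oxy _ | _ /= oyx]; first exact: df.
by have := df y x oyx; lia.
Qed.

Lemma cycle_value_diff phi psi c :
  (forall x y, o x y -> phi x y <= p) -> (forall x y, o x y -> psi x y <= p) ->
  cycle g c ->
  ((cycle_value p o psi c)%:Z - (cycle_value p o phi c)%:Z =
   \sum_(uv <- zip c (rot 1 c)) label_diff phi psi uv.1 uv.2)%R.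
Proof.
move=> le_phi le_psi cyc_c.
rewrite /cycle_value !(big_morph Posz PoszD (erefl (Posz 0))) -sumrB.
apply: eq_big_seq => -[u v] /(cycle_edge cyc_c) /= /o_xor.
rewrite /contrib /label_diff /=; case: (o u v) => //= ovu.
by have := le_phi v u ovu; have := le_psi v u ovu; lia.
Qed.

Definition differ_by_potential phi psi (h : V -> nat) :=
  forall x y, o x y -> psi x y + h x = phi x y + h y.

Lemma cycle_value_potential phi psi h c :
  (forall x y, o x y -> phi x y <= p) -> (forall x y, o x y -> psi x y <= p) ->
  differ_by_potential phi psi h -> cycle g c ->
  cycle_value p o phi c = cycle_value p o psi c.
Proof.
move=> le_phi le_psi dh cyc_c.
pose f v := Posz (h v).
have diff_h x y : g x y -> label_diff phi psi x y = (f y - f x)%R.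
  by apply: label_diff_potential => {}x {}y oxy; have := dh x y oxy; rewrite /f; lia.
have := cycle_value_diff le_phi le_psi cyc_c.
rewrite (eq_big_seq _ (fun uv => diff_h _ _ \o cycle_edge cyc_c)) telescope_cycle.
by move/eqP; rewrite subr_eq0 eqz_nat => /eqP.
Qed.

Lemma pq_labelling_le phi :
  pq_labelling p q g o phi -> forall x y, o x y -> phi x y <= p.
Proof. by move=> [lt_phi _] x y /lt_phi /ltnW. Qed.

Lemma eq_cycle_value phi psi c :
  (forall x y, o x y -> phi x y = psi x y) ->
  cycle g c -> cycle_value p o phi c = cycle_value p o psi c.
Proof.
move=> eq_phi cyc_c; apply: eq_big_seq => -[u v] /(cycle_edge cyc_c) /= /o_xor.
by rewrite /contrib /=; case: ifP => [/eq_phi -> | _ /eq_phi ->].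
Qed.

Lemma cut_relabelling_le phi phi' X alpha x y :
  (forall x y, o x y -> phi x y <= p) -> cut_relabelling p q o phi X alpha phi' ->
  o x y -> phi' x y <= p.
Proof.
move=> le_phi [_ al_bd _ in_le def_phi'] oxy; rewrite def_phi' //.
have := le_phi x y oxy; have := in_le x y oxy; move: al_bd.
by case: (x \in X); case: (y \in X) => /=; lia.
Qed.

Lemma cut_relabelling_cycle_value phi phi' X alpha c :
  (forall x y, o x y -> phi x y <= p) -> cut_relabelling p q o phi X alpha phi' ->
  cycle g c -> cycle_value p o phi c = cycle_value p o phi' c.
Proof.
move=> le_phi cut; have [_ _ out_ge in_le def_phi'] := cut.
apply: (cycle_value_potential (h := fun v => alpha * (v \in X))) => // x y oxy.
  exact: (cut_relabelling_le le_phi cut).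
rewrite def_phi' //; have := out_ge x y oxy; have := in_le x y oxy.
by case: (x \in X); case: (y \in X) => /=; lia.
Qed.

Lemma cut_relabelling_pq_labelling phi phi' X alpha :
  0 < q -> pq_labelling p q g o phi -> cut_relabelling p q o phi X alpha phi' ->
  pq_labelling p q g o phi'.
Proof.
move=> q_gt0 L_phi cut; have [_ [bd_phi cyc_phi]] := L_phi.
have le_phi := pq_labelling_le L_phi.
have bd_phi' x y : o x y -> q <= phi' x y <= p - q.
  have [_ _ out_ge in_le def_phi'] := cut; move=> oxy; rewrite def_phi' //.
  have := bd_phi x y oxy; have := out_ge x y oxy; have := in_le x y oxy.
  by case: (x \in X); case: (y \in X) => /=; lia.
split; first by move=> x y /bd_phi'; lia.
split=> // c is_cyc_c; have [_ _ cyc_c] := is_cyc_c.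
by rewrite -(cut_relabelling_cycle_value le_phi cut cyc_c); apply: cyc_phi.
Qed.

Lemma relabel_reach_cycle_value phi psi c :
  relabel_reach p q g o phi psi -> cycle g c ->
  cycle_value p o phi c = cycle_value p o psi c.
Proof.
move=> reach cyc_c; elim: reach => [{}phi {}psi /eq_cycle_value -> //|].
move=> {}phi phi' {}psi [L_phi [X [alpha cut]]] _ <-.
exact: (cut_relabelling_cycle_value (pq_labelling_le L_phi) cut cyc_c).
Qed.

Definition cut_relabel phi (X : {set V}) alpha x y :=
  if (x \in X) && (y \notin X) then phi x y - alpha
  else if (x \notin X) && (y \in X) then phi x y + alpha else phi x y.

Section Descent.
Hypotheses (q_gt0 : 0 < q) (pq2 : 2 * q <= p).

Lemma relabel_at_max phi psi h :
  (forall x y, o x y -> q <= psi x y <= p - q) -> pq_labelling p q g o phi ->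
  differ_by_potential phi psi h -> ~~ [forall v, h v == \max_w h w] ->
  exists phi' h', [/\ relabel_step p q g o phi phi', pq_labelling p q g o phi',
                      differ_by_potential phi' psi h' & \sum_v h' v < \sum_v h v].
Proof.
move=> bd_psi L_phi dh /forallPn[w hw_neq].
set M := \max_w h w; pose X := [set v | h v == M].
have le_M v : h v <= M by apply: leq_bigmax.
have [v0 hv0] : exists v0, h v0 = M.
  by exists [arg max_(i > w) h i]; rewrite /M (bigmax_eq_arg w).
(* h drops off X, so phi > psi on arcs leaving X and phi < psi on arcs entering X. *)
have cut : cut_relabelling p q o phi X 1 (cut_relabel phi X 1).
  split=> //.
  - apply/andP; split; apply/eqP => X_triv.
      by have := in_set0 v0; rewrite -X_triv inE hv0 eqxx.
    by have := in_setT w; rewrite -X_triv inE (negbTE hw_neq).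
  - lia.
  - move=> x y oxy; rewrite !inE => /eqP hx hy.
    by have := dh x y oxy; have := bd_psi x y oxy; have := le_M y; lia.
  - move=> x y oxy; rewrite !inE => hx /eqP hy.
    by have := dh x y oxy; have := bd_psi x y oxy; have := le_M x; lia.
exists (cut_relabel phi X 1), (fun v => h v - (v \in X)); split.
- by split; last by exists X, 1.
- exact: cut_relabelling_pq_labelling cut.
- move=> x y oxy; rewrite /cut_relabel !inE.
  by have := dh x y oxy; have := le_M x; have := le_M y; case: eqP; case: eqP => /=; lia.
- have M_gt0 : 0 < M by have := le_M w; move: hw_neq; lia.
  rewrite (bigD1 v0) // [X in _ < X](bigD1 v0) //= inE hv0 eqxx.
  have : \sum_(v | v != v0) (h v - (v \in X)) <= \sum_(v | v != v0) h v.
    by apply: leq_sum => v _; apply: leq_subr.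
  lia.
Qed.

Lemma potential_relabel_reach phi psi h :
  (forall x y, o x y -> q <= psi x y <= p - q) -> pq_labelling p q g o phi ->
  differ_by_potential phi psi h -> relabel_reach p q g o phi psi.
Proof.
move=> bd_psi; have [n] := ubnP (\sum_v h v).
elim: n phi h => // n IH phi h /ltnSE le_h_n L_phi dh.
have [/forallP h_const | h_nonconst] := boolP [forall v, h v == \max_w h w].
  apply: rr_refl => x y oxy; have := dh x y oxy.
  by rewrite (eqP (h_const x)) (eqP (h_const y)); lia.
have [phi' [h' [step L_phi' dh' lt_h]]] := relabel_at_max bd_psi L_phi dh h_nonconst.
by apply: rr_step step (IH _ _ _ L_phi' dh'); lia.
Qed.

End Descent.

Hypothesis g_irr : forall x, ~~ g x x.
Hypothesis o_sub : forall x y, o x y -> g x y.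
Hypothesis g_connected : forall x y, connect g x y.

Lemma simple_closed_walk_label_diff0 phi psi :
  (forall x y, o x y -> phi x y <= p) -> (forall x y, o x y -> psi x y <= p) ->
  (forall c, is_cycle g c -> cycle_value p o phi c = cycle_value p o psi c) ->
  forall x s, path g x s -> last x s = x -> uniq s -> 3 <= size s ->
  walk_weight (label_diff phi psi) x s = 0%R.
Proof.
move=> le_phi le_psi eq_cv x; case/lastP => [|s z] //.
rewrite last_rcons => walk_s zx; subst z; rewrite rcons_uniq size_rcons => uniq_s size_s.
have cyc_s : is_cycle g (x :: s) by split.
by rewrite /walk_weight belast_rcons -rot1_cons -cycle_value_diff // eq_cv ?subrr.
Qed.

Lemma exists_differ_by_potential phi psi :
  (forall x y, o x y -> phi x y <= p) -> (forall x y, o x y -> psi x y <= p) ->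
  (forall c, is_cycle g c -> cycle_value p o phi c = cycle_value p o psi c) ->
  exists h, differ_by_potential phi psi h.
Proof.
move=> le_phi le_psi eq_cv.
have [f df] := exists_potential g_connected (closed_walk_weight0 g_irr
  (@label_diff_anti phi psi) (simple_closed_walk_label_diff0 le_phi le_psi eq_cv)).
pose K := \sum_v `|f v|%N.
have le_K v : `|f v|%N <= K by rewrite /K (bigD1 v) //= leq_addr.
exists (fun v => `|(f v + Posz K)%R|%N) => x y oxy; have := df x y (o_sub oxy).
by rewrite /label_diff oxy; have := le_K x; have := le_K y; lia.
Qed.

End Labellings.

Theorem theorem2p2 (V : finType) (g o : rel V) (p q : nat)
  (phi psi : V -> V -> nat) :
  (0 < p)%N -> (0 < q)%N -> (2 * q <= p)%N ->
  simple_graph g -> connected_graph g -> orientation g o ->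
  pq_labelling p q g o phi -> pq_labelling p q g o psi ->
  (relabel_reach p q g o phi psi <->
   (forall c : seq V, is_cycle g c -> cycle_value p o phi c = cycle_value p o psi c)).
Proof.
move=> _ q_gt0 pq2 [g_irr _] g_conn [o_sub o_xor] L_phi L_psi.
split=> [reach c [_ _ cyc_c] | eq_cv].
  exact: (relabel_reach_cycle_value o_xor reach cyc_c).
have [h dh] := exists_differ_by_potential o_xor g_irr o_sub g_conn
  (pq_labelling_le L_phi) (pq_labelling_le L_psi) eq_cv.
have [_ [bd_psi _]] := L_psi.
exact: (potential_relabel_reach o_xor q_gt0 pq2 bd_psi L_phi dh).
Qed.
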